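(* Let $F$ be a group and $H \subseteq F$ a subgroup. Let $F'$ be an isomorphic copy of $F$, with $H' \subseteq F'$ the copy of $H$, and let $G = F *_{H=H'} F'$ be the double of $F$ along $H$ (the amalgamated free product of $F$ and $F'$ identifying each $h \in H$ with its copy $h' \in H'$). Let $\phi : F \to F$ be an endomorphism with $\phi(H) \subseteq H$, and let $\Phi : G \to G$ be the induced endomorphism, which acts as $\phi$ on $F$ and as the corresponding copy $\phi'$ of $\phi$ on $F'$. Suppose that the sequence of subgroups $\phi^{-n}(H) = \{g \in F : \phi^n(g) \in H\}$, $n = 0,1,2,\dots$, is strictly increasing. Then the sequence of subgroups $\operatorname{Kernel}(\Phi^n)$, $n = 0,1,2,\dots$, is strictly increasing.
   Context: The induced map $\Phi$ is well defined because $\phi(H)\subseteq H$, so $\phi$ and its copy $\phi'$ agree on the amalgamated subgroup $H = H'$. *)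

From Stdlib Require Import Arith.

Record group := Group {
  carrier :> Type;
  gmul : carrier -> carrier -> carrier;
  gone : carrier;
  ginv : carrier -> carrier;
  gmulA : forall x y z, gmul x (gmul y z) = gmul (gmul x y) z;
  gmul1l : forall x, gmul gone x = x;
  gmul1r : forall x, gmul x gone = x;
  gmulVl : forall x, gmul (ginv x) x = gone;
  gmulVr : forall x, gmul x (ginv x) = gone
}.

Arguments gmul {g}.
Arguments gone {g}.
Arguments ginv {g}.

Definition is_hom {A B : group} (f : A -> B) : Prop :=
  forall x y : A, f (gmul x y) = gmul (f x) (f y).

Definition is_subgroup {A : group} (H : A -> Prop) : Prop :=
  H gone /\ (forall x y, H x -> H y -> H (gmul x y)) /\ (forall x, H x -> H (ginv x)).

(* [is_double F H G i1 i2]: G together with i1 : F -> G (the factor F) and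
   i2 : F -> G (the factor F', i.e. F composed with the isomorphism F ~ F')
   is the amalgamated free product F *_{H = H'} F', characterized by its
   universal property (pushout of F <- H -> F' in the category of groups). *)
Definition is_double (F : group) (H : F -> Prop) (G : group) (i1 i2 : F -> G) : Prop :=
  is_hom i1 /\ is_hom i2 /\ (forall h, H h -> i1 h = i2 h) /\
  forall (K : group) (f1 f2 : F -> K),
    is_hom f1 -> is_hom f2 -> (forall h, H h -> f1 h = f2 h) ->
    exists u : G -> K, is_hom u /\ (forall x, u (i1 x) = f1 x) /\ (forall x, u (i2 x) = f2 x) /\
      (forall v : G -> K, is_hom v -> (forall x, v (i1 x) = f1 x) ->
         (forall x, v (i2 x) = f2 x) -> forall g, v g = u g).

Definition strictly_increasing {A : Type} (Sq : nat -> A -> Prop) : Prop :=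
  forall n : nat, (forall x, Sq n x -> Sq (n + 1) x) /\ exists x, Sq (n + 1) x /\ ~ Sq n x.

(* The element i1(x) i2(x)^-1 of the double is killed by Phi^n exactly when
   phi^n(x) lies in H, because i1 y = i2 y holds in the double only for y in H.
   This separation is seen by mapping the double to the permutations of
   F x bool: F acts by left translation, and F' by the conjugate of that action
   under the involution that swaps the two sheets over H.  Elements of H commute
   with the involution, so the universal property applies, while for y outside
   H the two actions send (1, false) to different sheets. *)
From Stdlib Require Import Arith Classical FunctionalExtensionality
  ProofIrrelevance ClassicalEpsilon.

Arguments gmulA {g}.
Arguments gmul1l {g}.
Arguments gmul1r {g}.
Arguments gmulVl {g}.
Arguments gmulVr {g}.

Section GroupFacts.
Variable A : group.

Lemma gmul_cancel_l (a x y : A) : gmul a x = gmul a y -> x = y.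
Proof.
  intro E. rewrite <- (gmul1l x), <- (gmul1l y), <- (gmulVl a), <- !gmulA, E.
  reflexivity.
Qed.

Lemma gmul_cancel_r (a x y : A) : gmul x a = gmul y a -> x = y.
Proof.
  intro E. rewrite <- (gmul1r x), <- (gmul1r y), <- (gmulVr a), !gmulA, E.
  reflexivity.
Qed.

Lemma ginv_mul (x y : A) : ginv (gmul x y) = gmul (ginv y) (ginv x).
Proof.
  apply (gmul_cancel_l (gmul x y)).
  rewrite gmulVr, gmulA, <- (gmulA x y), gmulVr, gmul1r, gmulVr.
  reflexivity.
Qed.

Lemma gmulV_eq1 (a b : A) : gmul a (ginv b) = gone <-> a = b.
Proof.
  split; intro E.
  - apply (gmul_cancel_r (ginv b)). rewrite E, gmulVr. reflexivity.
  - rewrite E. apply gmulVr.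
Qed.

End GroupFacts.

Section Homomorphisms.
Variables A B : group.
Variable f : A -> B.
Hypothesis f_hom : is_hom f.

Lemma hom_one : f gone = gone.
Proof.
  apply (gmul_cancel_l _ (f gone)). rewrite <- f_hom, !gmul1r. reflexivity.
Qed.

Lemma hom_inv (x : A) : f (ginv x) = ginv (f x).
Proof.
  apply (gmul_cancel_l _ (f x)). rewrite <- f_hom, !gmulVr. apply hom_one.
Qed.

Lemma conj_hom (t : B) : is_hom (fun g => gmul (ginv t) (gmul (f g) t)).
Proof.
  intros x y. rewrite f_hom, !gmulA, <- (gmulA _ t (ginv t)), gmulVr, gmul1r.
  reflexivity.
Qed.

End Homomorphisms.

Lemma iter_hom (A : group) (f : A -> A) (n : nat) : is_hom f -> is_hom (Nat.iter n f).
Proof.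
  intros f_hom. induction n as [|n IH]; intros x y; simpl; auto.
  rewrite IH. apply f_hom.
Qed.

Lemma iter_hom_kernel_mono (A : group) (f : A -> A) (n : nat) (g : A) :
  is_hom f -> Nat.iter n f g = gone -> Nat.iter (n + 1) f g = gone.
Proof.
  intros f_hom E. rewrite Nat.add_1_r. simpl. rewrite E. apply hom_one, f_hom.
Qed.

Lemma iter_intertwine (X Y : Type) (i : X -> Y) (a : X -> X) (b : Y -> Y) :
  (forall x, b (i x) = i (a x)) ->
  forall n x, Nat.iter n b (i x) = i (Nat.iter n a x).
Proof.
  intros E n x. induction n as [|n IH]; simpl; auto.
  rewrite IH. apply E.
Qed.

Section SymmetricGroup.
Variable X : Type.

Record perm := Perm {
  perm_fun : X -> X;
  perm_inv : X -> X;
  perm_funK : forall x, perm_fun (perm_inv x) = x;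
  perm_invK : forall x, perm_inv (perm_fun x) = x
}.

Lemma perm_ext (p q : perm) :
  (forall x, perm_fun p x = perm_fun q x) ->
  (forall x, perm_inv p x = perm_inv q x) -> p = q.
Proof.
  destruct p as [f g fK gK], q as [f' g' fK' gK']; simpl; intros E1 E2.
  apply functional_extensionality in E1. apply functional_extensionality in E2.
  subst. f_equal; apply proof_irrelevance.
Qed.

Definition perm_mul (p q : perm) : perm.
Proof.
  refine (Perm (fun x => perm_fun p (perm_fun q x))
               (fun x => perm_inv q (perm_inv p x)) _ _);
    intro x; rewrite ?perm_funK, ?perm_invK; reflexivity.
Defined.

Definition perm_one : perm :=
  Perm (fun x => x) (fun x => x) (fun _ => eq_refl) (fun _ => eq_refl).

Definition perm_rev (p : perm) : perm :=
  Perm (perm_inv p) (perm_fun p) (perm_invK p) (perm_funK p).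

Definition sym_group : group.
Proof.
  refine (Group perm perm_mul perm_one perm_rev _ _ _ _ _);
    intros; apply perm_ext; simpl; intros; rewrite ?perm_funK, ?perm_invK;
    reflexivity.
Defined.

Definition involution_perm (t : X -> X) (tK : forall x, t (t x) = x) : sym_group :=
  Perm t t tK tK.

End SymmetricGroup.

Section DoubleSeparation.
Variable F : group.
Variable H : F -> Prop.
Hypothesis H_subgroup : is_subgroup H.

Let sheet := (F * bool)%type.

Definition in_subgroupb (z : F) : bool :=
  if excluded_middle_informative (H z) then true else false.

Lemma in_subgroupb_mul (h z : F) : H h -> in_subgroupb (gmul h z) = in_subgroupb z.
Proof.
  destruct H_subgroup as [_ [H_mul H_inv]]. intro Hh. unfold in_subgroupb.
  destruct (excluded_middle_informative (H (gmul h z))) as [Hhz|Hhz];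
    destruct (excluded_middle_informative (H z)) as [Hz|Hz]; auto; exfalso.
  apply Hz. rewrite <- (gmul1l z), <- (gmulVl h), <- gmulA. auto.
Qed.

Definition sheet_swap (p : sheet) : sheet :=
  (fst p, xorb (in_subgroupb (fst p)) (snd p)).

Lemma sheet_swapK (p : sheet) : sheet_swap (sheet_swap p) = p.
Proof.
  destruct p as [z b]. unfold sheet_swap. simpl.
  destruct (in_subgroupb z), b; reflexivity.
Qed.

Definition swap : sym_group sheet := involution_perm sheet sheet_swap sheet_swapK.

Definition translation (g : F) : sym_group sheet.
Proof.
  refine (Perm sheet (fun p => (gmul g (fst p), snd p))
                     (fun p => (gmul (ginv g) (fst p), snd p)) _ _);
    intros [z b]; simpl; rewrite gmulA, ?gmulVr, ?gmulVl, gmul1l; reflexivity.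
Defined.

Definition conj_translation (g : F) : sym_group sheet :=
  gmul (ginv swap) (gmul (translation g) swap).

Lemma translation_hom : is_hom translation.
Proof.
  intros a b. apply perm_ext; intros [z c]; simpl.
  - rewrite gmulA. reflexivity.
  - rewrite ginv_mul, gmulA. reflexivity.
Qed.

Lemma translation_swap_comm (h : F) :
  H h -> gmul (translation h) swap = gmul swap (translation h).
Proof.
  intro Hh. destruct H_subgroup as [_ [_ H_inv]].
  apply perm_ext; intros [z c]; simpl; unfold sheet_swap; simpl;
    rewrite in_subgroupb_mul; auto.
Qed.

Lemma conj_translation_subgroup (h : F) : H h -> translation h = conj_translation h.
Proof.
  intro Hh. unfold conj_translation.
  rewrite translation_swap_comm, gmulA, gmulVl, gmul1l by exact Hh.
  reflexivity.
Qed.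

Lemma conj_translation_neq (y : F) : ~ H y -> translation y <> conj_translation y.
Proof.
  intros Hy E.
  assert (E1 := f_equal (fun p : sym_group sheet => perm_fun sheet p (gone, false)) E).
  destruct H_subgroup as [H_one _].
  simpl in E1. unfold sheet_swap, in_subgroupb in E1. simpl in E1.
  destruct (excluded_middle_informative (H gone)); [|contradiction].
  destruct (excluded_middle_informative (H (gmul y gone))) as [Hy1|_].
  - rewrite gmul1r in Hy1. contradiction.
  - discriminate E1.
Qed.

Lemma double_eq_subgroup (G : group) (i1 i2 : F -> G) (y : F) :
  is_double F H G i1 i2 -> i1 y = i2 y <-> H y.
Proof.
  intros [_ [_ [i_agree U]]]. split; [|apply i_agree].
  intro E. apply NNPP. intro Hy. apply (conj_translation_neq y Hy).
  destruct (U (sym_group sheet) translation conj_translation translation_hom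
              (conj_hom _ _ _ translation_hom swap) conj_translation_subgroup)
    as [u [_ [u1 [u2 _]]]].
  rewrite <- u1, <- u2, E. reflexivity.
Qed.

End DoubleSeparation.

Theorem lemma1 (F : group) (H : F -> Prop) (G : group) (i1 i2 : F -> G)
  (phi : F -> F) (Phi : G -> G) :
  is_subgroup H ->
  is_double F H G i1 i2 ->
  is_hom phi ->
  (forall h, H h -> H (phi h)) ->
  is_hom Phi ->
  (forall x, Phi (i1 x) = i1 (phi x)) ->
  (forall x, Phi (i2 x) = i2 (phi x)) ->
  strictly_increasing (fun n x => H (Nat.iter n phi x)) ->
  strictly_increasing (fun n (g : G) => Nat.iter n Phi g = gone).
Proof.
  (* The hypotheses on phi only guarantee that Phi exists. *)
  intros H_subgroup G_double _ _ Phi_hom Phi_i1 Phi_i2 H_strict n.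
  assert (iter_Phi_diff : forall m x,
    Nat.iter m Phi (gmul (i1 x) (ginv (i2 x))) = gone <-> H (Nat.iter m phi x)).
  { intros m x.
    rewrite (iter_hom _ _ m Phi_hom), (hom_inv _ _ _ (iter_hom _ _ m Phi_hom)),
      (iter_intertwine _ _ _ _ _ Phi_i1), (iter_intertwine _ _ _ _ _ Phi_i2),
      gmulV_eq1.
    exact (double_eq_subgroup F H H_subgroup G i1 i2 _ G_double). }
  split.
  - intro g. apply iter_hom_kernel_mono, Phi_hom.
  - destruct (H_strict n) as [_ [x [Hx Hnx]]].
    exists (gmul (i1 x) (ginv (i2 x))).
    rewrite !iter_Phi_diff. auto.
Qed.
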